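(* Let $k_1>k_2>0$ be integers and $p=\frac{k_1}{k_1+k_2}$. Then, as $t\to\infty$ through the positive integers, $$\lim_{t\to\infty}\sum_{i=0}^\infty\binom{tk_1+tk_2+2i}{tk_1+i}p^{tk_1+i}(1-p)^{tk_2+i}=\frac{1/4}{p-\frac12}.$$ *)

From Stdlib Require Import Reals.
From Coquelicot Require Import Coquelicot.
Open Scope R_scope.

Definition pk (k1 k2 : nat) : R := INR k1 / (INR k1 + INR k2).

Definition term (k1 k2 t i : nat) : R :=
  Binomial.C (t * k1 + t * k2 + 2 * i)%nat (t * k1 + i)%nat
  * (pk k1 k2) ^ (t * k1 + i)%nat * (1 - pk k1 k2) ^ (t * k2 + i)%nat.

(* Write a = t k1, b = t k2 and q = 1 - p, so that a q = b p and X ~ Bin(a + b, p) has mean a.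
   Vandermonde's identity splits the i-th term along the law of X, and the generating function
   sum_i C(2i, i + k) (pq)^i = (q/p)^k / (p - q) sums the resulting series: the total
   is E[phi(X)] / (p - q) with phi ([damping]) = 1 on {X <= a} and phi(a + j) = (q/p)^(2j).
   It remains to show E[phi(X)] -> 1/2.  The mode probability P(X = a) is O(1/sqrt b), which
   kills the damped upper tail; within a window |X - a| <= J the ratio
   P(X = a + j) / P(X = a - j) lies between (1 - d)^j and (1 + d)^j with d = O(1/b + J^2/b^2),
   and Chebyshev's inequality (Var X = a q) controls the mass outside the window.  Taking
   J = m * floor(sqrt b) gives |2 E[phi(X)] - 1| = O(1/m) as soon as m^8 <= b. *)

From Stdlib Require Import Reals Lra Lia.
From Coquelicot Require Import Coquelicot.
Open Scope R_scope.

Lemma sum_f_R0_succ_l (f : nat -> R) n :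
  sum_f_R0 f (S n) = f 0%nat + sum_f_R0 (fun i => f (S i)) n.
Proof. induction n as [|n IH]; simpl in *; lra. Qed.

Lemma sum_f_R0_rev (f : nat -> R) n : sum_f_R0 (fun j => f (n - j)%nat) n = sum_f_R0 f n.
Proof.
  induction n as [|n IH]; [reflexivity|].
  rewrite sum_f_R0_succ_l, tech5, <- IH, Nat.sub_0_r; simpl; lra.
Qed.

Lemma sum_f_R0_zero_tail (f : nat -> R) m n :
  (m <= n)%nat -> (forall x, (m < x)%nat -> f x = 0) -> sum_f_R0 f n = sum_f_R0 f m.
Proof.
  intros Hmn Hf; induction Hmn as [|n Hmn IH]; [reflexivity|].
  rewrite tech5, IH, Hf by lia; lra.
Qed.

Lemma sum_f_R0_split (f : nat -> R) m n :
  sum_f_R0 f (m + n) + f m = sum_f_R0 f m + sum_f_R0 (fun j => f (m + j)%nat) n.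
Proof.
  induction n as [|n IH]; simpl; rewrite ?Nat.add_0_r; [lra|].
  rewrite Nat.add_succ_r; simpl; lra.
Qed.

Lemma sum_f_R0_fold (g : nat -> R) a N :
  (a <= N)%nat -> (forall x, (N < x)%nat -> g x = 0) ->
  sum_f_R0 (fun j => (if (j <=? a)%nat then g (a - j)%nat else 0) + g (a + j)%nat) N
  = sum_f_R0 g N + g a.
Proof.
  intros HaN Hg; rewrite sum_plus.
  rewrite (sum_f_R0_zero_tail _ a N), (sum_eq _ (fun j => g (a - j)%nat)), sum_f_R0_rev;
    [| intros j Hj; now replace (j <=? a)%nat with true by (symmetry; apply Nat.leb_le; lia)
     | lia | intros j Hj; now replace (j <=? a)%nat with false by (symmetry; apply Nat.leb_gt; lia)].
  rewrite (sum_f_R0_zero_tail (fun j => g (a + j)%nat) (N - a) N) by (lia || (intros; apply Hg; lia)).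
  replace N with (a + (N - a))%nat at 2 by lia.
  rewrite <- sum_f_R0_split; lra.
Qed.

Lemma is_series_sum_f_R0 (f : nat -> nat -> R) (l : nat -> R) N :
  (forall x, (x <= N)%nat -> is_series (f x) (l x)) ->
  is_series (fun i => sum_f_R0 (fun x => f x i) N) (sum_f_R0 l N).
Proof.
  induction N as [|N IH]; intros Hf; simpl; [now apply Hf|].
  apply (is_series_plus (V := R_NormedModule)); [apply IH; intros; apply Hf|apply Hf]; lia.
Qed.

Lemma sum_f_R0_geom_le r n : 0 <= r < 1 -> sum_f_R0 (fun j => r ^ j) n <= / (1 - r).
Proof.
  intros Hr; pose proof (GP_finite r n) as HG; pose proof (pow_le r (n + 1)).
  assert (Hsum : sum_f_R0 (fun j => r ^ j) n = (1 - r ^ (n + 1)) / (1 - r))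
    by (apply Rmult_eq_reg_r with (r - 1); [rewrite HG; field|]; lra).
  rewrite Hsum; unfold Rdiv; rewrite <- (Rmult_1_l (/ (1 - r))) at 2.
  apply Rmult_le_compat_r; [apply Rlt_le, Rinv_0_lt_compat |]; lra.
Qed.

Lemma sum_f_R0_le_mono (f : nat -> R) m n :
  (forall x, 0 <= f x) -> (m <= n)%nat -> sum_f_R0 f m <= sum_f_R0 f n.
Proof.
  intros Hf Hmn; induction Hmn as [|n Hmn IH]; [lra|].
  simpl; pose proof (Hf (S n)); lra.
Qed.

Lemma bernoulli_ineq (u : R) (j : nat) : 0 <= u <= 1 -> 1 - INR j * u <= (1 - u) ^ j.
Proof.
  intros Hu; induction j as [|j IH]; [simpl; lra|].
  rewrite S_INR; change ((1 - u) ^ S j) with ((1 - u) * (1 - u) ^ j).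
  pose proof (pow_le (1 - u) j); pose proof (pos_INR j); nra.
Qed.

Lemma expanding_bounded_seq_zero (D : nat -> R) (r B : R) :
  0 < r < 1 -> (forall k, D (S k) * r = D k) -> (forall k, Rabs (D k) <= B) ->
  forall k, D k = 0.
Proof.
  intros Hr HD HB k.
  assert (Hpow : forall j, D k = D (k + j)%nat * r ^ j).
  { induction j as [|j IH]; simpl; [rewrite Nat.add_0_r; ring|].
    rewrite IH, <- HD, Nat.add_succ_r; ring. }
  assert (Hle : Rbar_le (Rabs (D k)) (B * 0)).
  { apply (is_lim_seq_le (fun _ => Rabs (D k)) (fun j => B * r ^ j)).
    - intros j; rewrite (Hpow j), Rabs_mult, (Rabs_right (r ^ j)) by (apply Rle_ge, pow_le; lra).
      apply Rmult_le_compat_r; [apply pow_le; lra | apply HB].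
    - apply is_lim_seq_const.
    - apply (is_lim_seq_scal_l _ B 0), is_lim_seq_geom; rewrite Rabs_right; lra. }
  simpl in Hle; rewrite Rmult_0_r in Hle; pose proof (Rabs_pos (D k)).
  apply Rabs_eq_0; lra.
Qed.

(** * Binomial coefficients *)

(* Unlike [Binomial.C], [binom n k] vanishes for [k > n], which Vandermonde's identity needs. *)
Fixpoint binom (n k : nat) : R :=
  match n, k with
  | _, O => 1
  | O, S _ => 0
  | S n, S k => binom n k + binom n (S k)
  end.

Lemma binom_n0 n : binom n 0 = 1.
Proof. now destruct n. Qed.

Lemma binom_SS n k : binom (S n) (S k) = binom n k + binom n (S k).
Proof. reflexivity. Qed.

Lemma binom_ge0 n k : 0 <= binom n k.
Proof.
  revert k; induction n as [|n IH]; intros [|k]; simpl; try lra.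
  pose proof (IH k); pose proof (IH (S k)); lra.
Qed.

Lemma binom_gt n k : (n < k)%nat -> binom n k = 0.
Proof.
  revert k; induction n as [|n IH]; intros [|k] Hk; try lia; [reflexivity|].
  rewrite binom_SS, !IH by lia; lra.
Qed.

Lemma binom_nn n : binom n n = 1.
Proof.
  induction n as [|n IH]; [reflexivity|].
  rewrite binom_SS, IH, binom_gt by lia; lra.
Qed.

Lemma binom_C n k : (k <= n)%nat -> binom n k = Binomial.C n k.
Proof.
  revert k; induction n as [|n IH]; intros [|k] Hk.
  - now rewrite C_n_0.
  - lia.
  - now rewrite binom_n0, C_n_0.
  - destruct (Nat.eq_dec k n) as [->|Hkn].
    + now rewrite binom_nn, C_n_n.
    + rewrite binom_SS, <- pascal, !IH by lia; reflexivity.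
Qed.

Lemma binom_sym n k : (k <= n)%nat -> binom n k = binom n (n - k).
Proof. intros Hk; rewrite !binom_C by lia; now apply pascal_step1. Qed.

Lemma binom_le_pow2 n k : binom n k <= 2 ^ n.
Proof.
  revert k; induction n as [|n IH]; intros [|k]; simpl; try lra.
  - pose proof (pow_R1_Rle 2 n); lra.
  - pose proof (IH k); pose proof (IH (S k)); lra.
Qed.

Lemma binom_succ_ratio n k : binom n (S k) * INR (S k) = binom n k * (INR n - INR k).
Proof.
  revert k; induction n as [|n IH]; intros [|k].
  - simpl; lra.
  - simpl; lra.
  - rewrite binom_SS, Rmult_plus_distr_r, IH, !binom_n0, !S_INR.
    change (INR 0) with 0; lra.
  - rewrite binom_SS, Rmult_plus_distr_r, IH, binom_SS.
    pose proof (IH k) as Hk; rewrite !S_INR in *; nra.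
Qed.

Lemma binom_pos n k : (k <= n)%nat -> 0 < binom n k.
Proof.
  revert k; induction n as [|n IH]; intros [|k] Hk; try (simpl; lra); try lia.
  rewrite binom_SS; pose proof (IH k ltac:(lia)).
  destruct (Nat.eq_dec k n) as [->|]; [rewrite (binom_gt n (S n)) by lia | pose proof (IH (S k) ltac:(lia))]; lra.
Qed.

Lemma binom_vandermonde m n k :
  binom (m + n) k
  = sum_f_R0 (fun j => binom m j * (if (j <=? k)%nat then binom n (k - j) else 0)) m.
Proof.
  revert k; induction m as [|m IH]; intros k.
  - simpl; rewrite Nat.sub_0_r; lra.
  - rewrite sum_f_R0_succ_l; destruct k as [|k].
    + rewrite sum_eq_R0; [simpl; rewrite !binom_n0; lra|].
      intros j _; simpl; ring.
    + rewrite Nat.add_succ_l, binom_SS, !IH.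
      pose proof (sum_f_R0_succ_l
        (fun j => binom m j * (if (j <=? S k)%nat then binom n (S k - j) else 0)) m) as Hshift.
      rewrite tech5, (binom_gt m (S m)) in Hshift by lia.
      rewrite (sum_eq (fun i => binom (S m) (S i) * _)
        (fun i => binom m i * (if (i <=? k)%nat then binom n (k - i) else 0)
                  + binom m (S i) * (if (i <=? k)%nat then binom n (k - i) else 0)))
        by (intros i _; rewrite binom_SS; simpl; ring).
      rewrite sum_plus; simpl in *; rewrite binom_n0 in *; lra.
Qed.

(** * The series sum_i C(2i, i + k) (pq)^i *)

Section ShiftedCentralBinomial.

Variables p q : R.
Hypotheses (hq : 0 < q) (hqp : q < p) (hpq : p + q = 1).

Definition cb (k i : nat) : R := binom (2 * i) (i + k) * (p * q) ^ i.

Local Notation CB k := (Series (cb k)).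

Lemma four_pq_bounds : 0 < 4 * (p * q) < 1.
Proof. replace p with (1 - q) by lra; split; nra. Qed.

Lemma cb_bounds k i : 0 <= cb k i <= (4 * (p * q)) ^ i.
Proof.
  pose proof four_pq_bounds.
  unfold cb; split.
  - apply Rmult_le_pos; [apply binom_ge0 | apply pow_le; lra].
  - rewrite (Rpow_mult_distr 4); apply Rmult_le_compat_r; [apply pow_le; lra|].
    replace (4 ^ i) with (2 ^ (2 * i)) by (rewrite pow_mult; f_equal; lra).
    apply binom_le_pow2.
Qed.

Lemma is_series_cb_dominant : is_series (fun i => (4 * (p * q)) ^ i) (/ (1 - 4 * (p * q))).
Proof. pose proof four_pq_bounds; apply is_series_geom; rewrite Rabs_right; lra. Qed.

Lemma ex_series_cb k : ex_series (cb k).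
Proof.
  apply (ex_series_le (V := R_CompleteNormedModule)) with (fun i => (4 * (p * q)) ^ i).
  - intros i; change (norm (cb k i)) with (Rabs (cb k i)).
    destruct (cb_bounds k i); rewrite Rabs_right; lra.
  - eexists; apply is_series_cb_dominant.
Qed.

Lemma cb_sum_bounds k : 0 <= CB k <= / (1 - 4 * (p * q)).
Proof.
  split.
  - replace 0 with (Series (fun i => 0 * cb k i)) by (rewrite Series_scal_l; ring).
    apply Series_le; [intros i; pose proof (cb_bounds k i); lra | apply ex_series_cb].
  - rewrite <- (is_series_unique _ _ is_series_cb_dominant).
    apply Series_le; [apply cb_bounds | eexists; apply is_series_cb_dominant].
Qed.

Lemma cb_sum_incr k :
  CB k = cb k 0 + p * q * Series (fun i => binom (2 * S i) (S i + k) * (p * q) ^ i).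
Proof.
  rewrite Series_incr_1 by apply ex_series_cb; f_equal.
  rewrite <- Series_scal_l; apply Series_ext; intros i; unfold cb; simpl pow; ring.
Qed.

Lemma ex_series_cb_scal c k : ex_series (fun i => c * cb k i).
Proof. apply (ex_series_scal_l (V := R_NormedModule)), ex_series_cb. Qed.

Lemma cb_sum_rec k : CB (S k) = p * q * (CB k + 2 * CB (S k) + CB (S (S k))).
Proof.
  rewrite cb_sum_incr at 1.
  replace (cb (S k) 0) with 0 by (unfold cb; simpl; ring).
  rewrite Rplus_0_l; f_equal.
  rewrite <- (Series_scal_l 2 (cb (S k))), <- Series_plus, <- Series_plus;
    try solve [repeat first [ apply ex_series_cb | apply ex_series_cb_scal
                            | apply (ex_series_plus (V := R_NormedModule)) ]].
  apply Series_ext; intros i; unfold cb.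
  replace (2 * S i)%nat with (S (S (2 * i))) by lia.
  replace (S i + S k)%nat with (S (S (i + k))) by lia.
  replace (i + S k)%nat with (S (i + k)) by lia.
  replace (i + S (S k))%nat with (S (S (i + k))) by lia.
  rewrite !binom_SS; ring.
Qed.

Lemma cb_sum_rec0 : CB 0 = 1 + 2 * (p * q) * (CB 0 + CB 1).
Proof.
  rewrite cb_sum_incr at 1.
  replace (cb 0 0) with 1 by (unfold cb; simpl; ring).
  rewrite <- Series_plus by apply ex_series_cb.
  replace (2 * (p * q) * _) with (p * q * Series (fun i => 2 * (cb 0 i + cb 1 i)))
    by (rewrite Series_scal_l; ring).
  f_equal; f_equal; apply Series_ext; intros i; unfold cb.
  replace (2 * S i)%nat with (S (S (2 * i))) by lia.
  rewrite !Nat.add_0_r, binom_SS, (binom_sym (S (2 * i)) i) by lia.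
  replace (S (2 * i) - i)%nat with (S i) by lia.
  replace (i + 1)%nat with (S i) by lia.
  rewrite binom_SS; ring.
Qed.

(* [CB] solves a second-order recurrence with characteristic roots [q/p] and [p/q];
   boundedness rules out the [p/q] mode. *)
Lemma cb_sum_geometric k : CB (S k) = q / p * CB k.
Proof.
  set (r := q / p).
  assert (Hrp : r * p = q) by (unfold r; field; lra).
  assert (Hr : 0 < r < 1) by (split; nra).
  assert (Hx : (1 - 2 * (p * q)) / (p * q) = r + / r)
    by (unfold r; replace p with (1 - q) by lra; field; split; lra).
  pose proof four_pq_bounds.
  assert (Hrec : forall k, (CB (S (S k)) - r * CB (S k)) * r = CB (S k) - r * CB k).
  { intros j; pose proof (cb_sum_rec j) as Hj.
    assert (Hj' : CB (S (S j)) = (1 - 2 * (p * q)) / (p * q) * CB (S j) - CB j).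
    { apply Rmult_eq_reg_l with (p * q); [|nra].
      replace (p * q * ((1 - 2 * (p * q)) / (p * q) * CB (S j) - CB j))
        with ((1 - 2 * (p * q)) * CB (S j) - p * q * CB j) by (field; nra).
      lra. }
    rewrite Hx in Hj'; rewrite Hj'; field; lra. }
  assert (Hbound : forall k, Rabs (CB (S k) - r * CB k) <= 2 / (1 - 4 * (p * q))).
  { intros j; pose proof (cb_sum_bounds j); pose proof (cb_sum_bounds (S j)).
    unfold Rdiv; apply Rabs_le; split; nra. }
  pose proof (expanding_bounded_seq_zero (fun k => CB (S k) - r * CB k) r _ Hr Hrec Hbound k).
  simpl in *; lra.
Qed.

Lemma is_series_cb k : is_series (cb k) ((q / p) ^ k / (p - q)).
Proof.
  assert (Hk : forall k, CB k = (q / p) ^ k * CB 0).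
  { induction k0 as [|k0 IH]; simpl; [ring|]. rewrite cb_sum_geometric, IH; ring. }
  assert (H0 : CB 0 * (p - q) = 1).
  { pose proof cb_sum_rec0 as H0; rewrite (Hk 1%nat) in H0; simpl in H0.
    replace (2 * (p * q) * (CB 0 + q / p * 1 * CB 0)) with (2 * q * (p + q) * CB 0) in H0
      by (field; lra).
    rewrite hpq in H0; replace (p - q) with (1 - 2 * q) by lra; lra. }
  replace ((q / p) ^ k / (p - q)) with (CB k).
  - apply Series_correct, ex_series_cb.
  - rewrite Hk; unfold Rdiv; f_equal.
    apply Rmult_eq_reg_r with (p - q); [rewrite Rinv_l | ]; lra.
Qed.
End ShiftedCentralBinomial.

(** * The binomial distribution *)

Section BinomialDistribution.

Variables p q : R.
Hypotheses (hq : 0 < q) (hp : 0 < p) (hpq : p + q = 1).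

Definition pmf (N x : nat) : R := binom N x * p ^ x * q ^ (N - x).

Lemma pmf_ge0 N x : 0 <= pmf N x.
Proof.
  unfold pmf; repeat apply Rmult_le_pos; try apply binom_ge0; apply pow_le; lra.
Qed.

Lemma pmf_gt N x : (N < x)%nat -> pmf N x = 0.
Proof. intros; unfold pmf; rewrite binom_gt by lia; ring. Qed.

Lemma pmf_sum N : sum_f_R0 (pmf N) N = 1.
Proof.
  rewrite <- (pow1 N), <- hpq, binomial; apply sum_eq; intros x Hx.
  unfold pmf; now rewrite binom_C.
Qed.

Lemma pmf_succ_ratio N x : pmf N (S x) * INR (S x) * q = pmf N x * (INR N - INR x) * p.
Proof.
  unfold pmf.
  replace (binom N (S x) * p ^ S x * q ^ (N - S x) * INR (S x) * q)
    with (binom N (S x) * INR (S x) * p ^ S x * q ^ (N - S x) * q) by ring.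
  rewrite binom_succ_ratio.
  destruct (Nat.lt_total x N) as [HxN | [-> | HxN]].
  - replace (N - x)%nat with (S (N - S x)) by lia; simpl; ring.
  - rewrite Rminus_diag; ring.
  - rewrite binom_gt by lia; ring.
Qed.

Lemma sum_pmf_shift N (f : nat -> R) :
  f 0%nat = 0 -> sum_f_R0 (fun x => pmf N (S x) * f (S x)) N = sum_f_R0 (fun x => pmf N x * f x) N.
Proof.
  intros Hf0; pose proof (sum_f_R0_succ_l (fun x => pmf N x * f x) N) as H.
  rewrite tech5, pmf_gt, Hf0 in H by lia; lra.
Qed.

Lemma pmf_mean N : sum_f_R0 (fun x => pmf N x * INR x) N = INR N * p.
Proof.
  pose proof (sum_pmf_shift N INR eq_refl) as H.
  rewrite (sum_eq _ (fun x => pmf N x * (INR N - INR x) * p / q)) in H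
    by (intros x _; rewrite <- pmf_succ_ratio; field; lra).
  rewrite (sum_eq (fun x => pmf N x * (INR N - INR x) * p / q)
                  (fun x => pmf N x * (p / q * INR N) - pmf N x * INR x * (p / q)))
    in H by (intros; unfold Rdiv; ring).
  rewrite minus_sum, <- !scal_sum, pmf_sum in H.
  set (M1 := sum_f_R0 (fun x => pmf N x * INR x) N) in H |- *.
  assert (H' : p * INR N - p * M1 = q * M1).
  { replace (p * INR N - p * M1) with (q * (p / q * INR N * 1 - p / q * M1)) by (field; lra).
    rewrite H; ring. }
  replace M1 with (M1 * (p + q)) by (rewrite hpq; ring); lra.
Qed.

Lemma pmf_second_moment N :
  sum_f_R0 (fun x => pmf N x * (INR x * INR x)) N = INR N * p * (q + INR N * p).
Proof.
  pose proof (sum_pmf_shift N (fun y => INR y * (INR y - 1)) ltac:(simpl; ring)) as H.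
  rewrite (sum_eq _ (fun x => pmf N x * (INR N - INR x) * p / q * INR x)) in H
    by (intros x _; rewrite <- pmf_succ_ratio, S_INR; field; lra).
  rewrite (sum_eq (fun x => pmf N x * (INR N - INR x) * p / q * INR x)
                  (fun x => pmf N x * INR x * (p / q * INR N) - pmf N x * (INR x * INR x) * (p / q)))
    in H by (intros; unfold Rdiv; ring).
  rewrite (sum_eq (fun x => pmf N x * (INR x * (INR x - 1)))
                  (fun x => pmf N x * (INR x * INR x) - pmf N x * INR x))
    in H by (intros; ring).
  rewrite !minus_sum, <- !scal_sum, pmf_mean in H.
  set (M2 := sum_f_R0 (fun x => pmf N x * (INR x * INR x)) N) in H |- *.
  assert (H' : p * INR N * (INR N * p) - M2 * p = M2 * q - INR N * p * q).
  { replace (p * INR N * (INR N * p) - M2 * p)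
      with (q * (p / q * INR N * (INR N * p) - p / q * M2)) by (field; lra).
    rewrite H; ring. }
  replace M2 with (M2 * (p + q)) by (rewrite hpq; ring); lra.
Qed.

Lemma pmf_variance_at_mean a b :
  INR a * q = INR b * p ->
  sum_f_R0 (fun x => pmf (a + b) x * (INR x - INR a) ^ 2) (a + b) = INR a * q.
Proof.
  intros Hab; assert (Ha : INR (a + b) * p = INR a) by (rewrite plus_INR; nra).
  rewrite (sum_eq _ (fun x => pmf (a + b) x * (INR x * INR x)
                              - pmf (a + b) x * INR x * (2 * INR a)
                              + pmf (a + b) x * (INR a * INR a))) by (intros; ring).
  rewrite sum_plus, minus_sum, <- !scal_sum, pmf_second_moment, pmf_mean, pmf_sum, Ha.
  nra.
Qed.

End BinomialDistribution.

(** * The series as an expectation *)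

Lemma damping_ratio_bounds p q : 0 < q -> q < p -> 0 <= (q / p) ^ 2 < 1.
Proof.
  intros hq hqp; assert (q / p * p = q) by (field; lra).
  assert (0 < q / p < 1) by (split; nra); simpl; nra.
Qed.

Section DampedSeries.

Variables p q : R.
Hypotheses (hq : 0 < q) (hqp : q < p) (hpq : p + q = 1).

Definition damping (a x : nat) : R := if (x <=? a)%nat then 1 else (q / p) ^ (2 * (x - a)).

Definition damped_mass (a b : nat) : R :=
  sum_f_R0 (fun x => pmf p q (a + b) x * damping a x) (a + b).

Definition cb_tilt (a x i : nat) : R :=
  if (x <=? a)%nat then cb p q (a - x) i * (p / q) ^ (a - x)
  else cb p q (x - a) i * (q / p) ^ (x - a).

Lemma is_series_cb_scaled c k :
  is_series (fun i => cb p q k i * c) (c * ((q / p) ^ k / (p - q))).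
Proof.
  apply is_series_ext with (fun i => c * cb p q k i); [intros; apply Rmult_comm|].
  exact (is_series_scal_l (V := R_NormedModule) c _ _ (is_series_cb p q hq hqp hpq k)).
Qed.

Lemma is_series_cb_tilt a x : is_series (cb_tilt a x) (damping a x / (p - q)).
Proof.
  unfold cb_tilt, damping; destruct (x <=? a)%nat.
  - replace (1 / (p - q)) with ((p / q) ^ (a - x) * ((q / p) ^ (a - x) / (p - q))).
    + apply is_series_cb_scaled.
    + unfold Rdiv; rewrite <- Rmult_assoc, <- Rpow_mult_distr.
      replace (p * / q * (q * / p)) with 1 by (field; split; lra); rewrite pow1; ring.
  - replace ((q / p) ^ (2 * (x - a)) / (p - q)) with ((q / p) ^ (x - a) * ((q / p) ^ (x - a) / (p - q))).
    + apply is_series_cb_scaled.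
    + unfold Rdiv; rewrite <- Rmult_assoc, <- pow_add; do 2 f_equal; lia.
Qed.

Lemma binom_term_decomp a b i x : (x <= a + b)%nat ->
  binom (a + b) x * (if (x <=? a + i)%nat then binom (2 * i) (a + i - x) else 0)
  * p ^ (a + i) * q ^ (b + i)
  = pmf p q (a + b) x * cb_tilt a x i.
Proof.
  intros Hx; unfold pmf, cb_tilt, cb.
  assert (p <> 0) by lra; assert (q <> 0) by lra.
  destruct (Nat.leb_spec x a) as [Hxa|Hxa].
  - replace (x <=? a + i)%nat with true by (symmetry; apply Nat.leb_le; lia).
    set (k := (a - x)%nat).
    replace (a + i - x)%nat with (i + k)%nat by lia.
    replace (a + b - x)%nat with (k + b)%nat by lia.
    replace (a + i)%nat with (x + k + i)%nat by lia.
    rewrite !pow_add; unfold Rdiv; rewrite !Rpow_mult_distr, pow_inv.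
    field; apply pow_nonzero; auto.
  - set (m := (x - a)%nat).
    replace (a + b - x)%nat with (b - m)%nat by lia.
    destruct (Nat.leb_spec x (a + i)).
    + replace (a + i - x)%nat with (i - m)%nat by lia.
      rewrite (binom_sym (2 * i) (i - m)) by lia.
      replace (2 * i - (i - m))%nat with (i + m)%nat by lia.
      replace x with (a + m)%nat by lia.
      replace (b + i)%nat with (b - m + m + i)%nat by lia.
      rewrite !pow_add; unfold Rdiv; rewrite !Rpow_mult_distr, pow_inv.
      field; apply pow_nonzero; auto.
    + rewrite (binom_gt (2 * i) (i + m)) by lia; ring.
Qed.

Lemma is_series_damped_mass a b :
  is_series (fun i => binom (a + b + 2 * i) (a + i) * p ^ (a + i) * q ^ (b + i))
            (damped_mass a b / (p - q)).
Proof.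
  replace (damped_mass a b / (p - q))
    with (sum_f_R0 (fun x => pmf p q (a + b) x * (damping a x / (p - q))) (a + b))
    by (unfold damped_mass, Rdiv; rewrite (Rmult_comm (sum_f_R0 _ _)), scal_sum;
        apply sum_eq; intros; ring).
  apply is_series_ext with (fun i => sum_f_R0 (fun x => pmf p q (a + b) x * cb_tilt a x i) (a + b)).
  - intros i; rewrite binom_vandermonde, Rmult_assoc, (Rmult_comm (sum_f_R0 _ _)), scal_sum.
    apply sum_eq; intros x Hx.
    rewrite <- binom_term_decomp by lia; ring.
  - apply is_series_sum_f_R0; intros x _.
    exact (is_series_scal_l (V := R_NormedModule) _ _ _ (is_series_cb_tilt a x)).
Qed.

End DampedSeries.

(** * Local estimates around the mean *)

(* Divided by [(A + j + 1) (A - j) B^2], the middle term is the factor by which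
   P(X = a + j) / P(X = a - j) changes from [j] to [j + 1] (see [pmf_cross_identity]). *)
Lemma mode_ratio_bounds (A B j J : R) :
  0 < B -> B < A -> 0 <= j -> j + 1 <= J -> J <= B -> 2 * (J * J) <= A * A ->
  let d := 2 / B + 2 * (J * J) / (B * B) in
  (1 - d) * ((A + j + 1) * (A - j) * (B * B)) <= (B - j) * (B + j + 1) * (A * A)
  <= (1 + d) * ((A + j + 1) * (A - j) * (B * B)).
Proof.
  intros HB HBA Hj HjJ HJB HJA d.
  set (D := (A + j + 1) * (A - j) * (B * B)); set (U := (B - j) * (B + j + 1) * (A * A)).
  assert (Hjj : j * j + j <= J * J) by nra.
  assert (HD : A * A * (B * B) / 2 <= D).
  { unfold D; replace ((A + j + 1) * (A - j)) with (A * A + A - (j * j + j)) by ring; nra. }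
  assert (HUD : U - D = A * B * (A - B) - (j * j + j) * (A * A - B * B)) by (unfold U, D; ring).
  assert (HdD : d * D = 2 / B * D + 2 * (J * J) / (B * B) * D) by (unfold d; ring).
  assert (HdD1 : A * A * B <= 2 / B * D).
  { apply Rmult_le_reg_r with B; [lra|]; unfold Rdiv.
    replace (2 * / B * D * B) with (2 * D) by (field; lra); nra. }
  assert (HdD2 : J * J * (A * A) <= 2 * (J * J) / (B * B) * D).
  { apply Rmult_le_reg_r with (B * B); [nra|]; unfold Rdiv.
    replace (2 * (J * J) * / (B * B) * D * (B * B)) with (2 * (J * J) * D) by (field; lra).
    nra. }
  assert (0 <= 2 / B * D) by (apply Rmult_le_pos; [apply Rlt_le, Rdiv_lt_0_compat|]; nra).
  assert (0 <= 2 * (J * J) / (B * B) * D)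
    by (apply Rmult_le_pos; [apply Rmult_le_pos; [nra | apply Rlt_le, Rinv_0_lt_compat; nra]|nra]).
  assert (0 <= (j * j + j) * (A * A - B * B)) by (apply Rmult_le_pos; nra).
  assert (A * B * (A - B) <= A * A * B) by nra.
  assert (0 <= A * B * (A - B)) by (apply Rmult_le_pos; nra).
  assert ((j * j + j) * (A * A - B * B) <= J * J * (A * A)) by nra.
  split; nra.
Qed.

Lemma ratio_step_upper (X Y X' Y' K R c e : R) :
  0 < Y -> 0 < K -> 0 <= Y' -> 0 <= R -> 0 <= c ->
  X' * Y * K = X * Y' * R -> X <= c * Y -> R <= e * K -> X' <= c * e * Y'.
Proof.
  intros HY HK HY' HR Hc Hid HX HRe.
  apply Rmult_le_reg_r with (Y * K); [nra|].
  replace (X' * (Y * K)) with (X * Y' * R) by (rewrite <- Hid; ring).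
  apply Rle_trans with (c * Y * Y' * R); [apply Rmult_le_compat_r; [lra|]; nra|].
  replace (c * e * Y' * (Y * K)) with (c * Y * Y' * (e * K)) by ring.
  apply Rmult_le_compat_l; [repeat apply Rmult_le_pos; lra | lra].
Qed.

Lemma ratio_step_lower (X Y X' Y' K R c e : R) :
  0 < Y -> 0 < K -> 0 <= Y' -> 0 <= R -> 0 <= c ->
  X' * Y * K = X * Y' * R -> c * Y <= X -> e * K <= R -> c * e * Y' <= X'.
Proof.
  intros HY HK HY' HR Hc Hid HX HRe.
  apply Rmult_le_reg_r with (Y * K); [nra|].
  replace (X' * (Y * K)) with (X * Y' * R) by (rewrite <- Hid; ring).
  apply Rle_trans with (c * Y * Y' * R); [|apply Rmult_le_compat_r; [lra|]; nra].
  replace (c * e * Y' * (Y * K)) with (c * Y * Y' * (e * K)) by ring.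
  apply Rmult_le_compat_l; [repeat apply Rmult_le_pos; lra | lra].
Qed.

Lemma window_rates (m s b : R) :
  8 <= m -> m ^ 4 <= s -> s * s <= b -> b < (s + 1) * (s + 1) ->
  m * s * (2 / b + 2 * (m * s * (m * s)) / (b * b)) <= 4 / m
  /\ b / (m * s * (m * s)) <= 1 / m.
Proof.
  intros HM HMS HSB HBS.
  assert (HM3 : 0 < m ^ 3) by (apply pow_lt; lra).
  assert (HS : m <= s) by (simpl in HMS; nra).
  assert (HS1 : 1 <= s) by lra.
  assert (HB : 0 < b) by nra.
  split.
  - assert (H1 : m * s * (2 / b) <= 2 * m / s).
    { unfold Rdiv; rewrite <- Rmult_assoc.
      apply Rmult_le_reg_r with (b * s); [nra|].
      replace (m * s * 2 * / b * (b * s)) with (2 * m * s * s) by (field; lra).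
      replace (2 * m * / s * (b * s)) with (2 * m * b) by (field; lra); nra. }
    assert (H2 : m * s * (2 * (m * s * (m * s)) / (b * b)) <= 2 * m ^ 3 / s).
    { apply Rmult_le_reg_r with (b * b * s); [nra|]; unfold Rdiv.
      replace (m * s * (2 * (m * s * (m * s)) * / (b * b)) * (b * b * s))
        with (2 * m ^ 3 * (s * s) * (s * s)) by (field; lra).
      replace (2 * m ^ 3 * / s * (b * b * s)) with (2 * m ^ 3 * (b * b)) by (field; lra).
      assert (0 <= s * s) by nra; assert ((s * s) * (s * s) <= b * b) by nra; nra. }
    assert (H3 : 2 * m / s + 2 * m ^ 3 / s <= 4 / m).
    { apply Rmult_le_reg_r with (m * s); [nra|]; unfold Rdiv.
      replace ((2 * m * / s + 2 * m ^ 3 * / s) * (m * s)) with (2 * m * m + 2 * m ^ 4)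
        by (simpl; field; lra).
      replace (4 * / m * (m * s)) with (4 * s) by (field; lra).
      assert (m * m <= m ^ 4) by (simpl; nra); lra. }
    rewrite Rmult_plus_distr_l; lra.
  - assert (HJ : 0 < m * s * (m * s)) by (apply Rmult_lt_0_compat; nra).
    apply Rmult_le_reg_r with (m * (m * s * (m * s))); [nra|]; unfold Rdiv.
    replace (b * / (m * s * (m * s)) * (m * (m * s * (m * s)))) with (m * b) by (field; nra).
    replace (1 * / m * (m * (m * s * (m * s)))) with (m * s * (m * s)) by (field; lra).
    assert (b <= 4 * (s * s)) by nra.
    assert (m * b <= m * (4 * (s * s))) by (apply Rmult_le_compat_l; lra).
    assert (4 * m * (s * s) <= m * m * (s * s)) by (apply Rmult_le_compat_r; nra).
    lra.
Qed.

Lemma pow8_ge (m : nat) : (8 <= m)%nat -> (8 * m * m <= m ^ 8)%nat.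
Proof.
  intros Hm; assert (m <= m ^ 6)%nat
    by (rewrite <- (Nat.pow_1_r m) at 1; apply Nat.pow_le_mono_r; lia).
  change (m ^ 8)%nat with (m ^ (2 + 6))%nat; rewrite Nat.pow_add_r, Nat.pow_2_r; nia.
Qed.

Section NearMode.

Variables p q : R.
Hypotheses (hq : 0 < q) (hqp : q < p) (hpq : p + q = 1).
Variables a b : nat.
Hypotheses (hab : INR a * q = INR b * p) (hb : (0 < b)%nat).

Local Notation pi := (pmf p q (a + b)).

Lemma b_lt_a : (b < a)%nat.
Proof. apply INR_lt; pose proof (lt_0_INR b hb); nra. Qed.

Lemma pmf_pos x : (x <= a + b)%nat -> 0 < pi x.
Proof.
  intros Hx; unfold pmf; pose proof (binom_pos _ _ Hx).
  repeat apply Rmult_lt_0_compat; try apply pow_lt; lra.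
Qed.

Lemma pmf_up_ratio j : pi (S (a + j)) * INR (S (a + j)) * q = pi (a + j) * (INR b - INR j) * p.
Proof. rewrite pmf_succ_ratio by lra; rewrite !plus_INR; ring. Qed.

Lemma pmf_down_ratio j : (S j <= a)%nat ->
  pi (a - j) * INR (a - j) * q = pi (a - S j) * (INR b + INR (S j)) * p.
Proof.
  intros Hj; replace (a - j)%nat with (S (a - S j)) by lia.
  rewrite pmf_succ_ratio by lra; rewrite plus_INR, minus_INR, S_INR by lia; ring.
Qed.

Lemma pmf_le_mode j : pi (a + j) <= pi a.
Proof.
  induction j as [|j IH]; [rewrite Nat.add_0_r; lra|].
  apply Rle_trans with (pi (a + j)); [|exact IH].
  replace (a + S j)%nat with (S (a + j)) by lia.
  assert (HSq : 0 < INR (S (a + j)) * q) by (apply Rmult_lt_0_compat; [apply lt_0_INR; lia | lra]).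
  apply Rmult_le_reg_r with (INR (S (a + j)) * q); [exact HSq|].
  rewrite <- Rmult_assoc, pmf_up_ratio, Rmult_assoc.
  apply Rmult_le_compat_l; [apply pmf_ge0; lra|].
  rewrite S_INR, plus_INR; pose proof (pos_INR j); nra.
Qed.

Definition pmf_below (j : nat) : R := if (j <=? a)%nat then pi (a - j) else 0.
Definition pmf_above (j : nat) : R := pi (a + j).

Lemma pmf_below_ge0 j : 0 <= pmf_below j.
Proof. unfold pmf_below; destruct (j <=? a)%nat; [apply pmf_ge0|]; lra. Qed.

Lemma pmf_above_ge0 j : 0 <= pmf_above j.
Proof. apply pmf_ge0; lra. Qed.

Lemma sum_pmf_fold (f : nat -> R) :
  sum_f_R0 (fun x => pi x * f x) (a + b) + pi a * f a
  = sum_f_R0 (fun j => pmf_below j * f (a - j)%nat + pmf_above j * f (a + j)%nat) (a + b).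
Proof.
  rewrite <- (sum_f_R0_fold (fun x => pi x * f x)) by (lia || (intros; rewrite pmf_gt by lia; ring)).
  apply sum_eq; intros j _; unfold pmf_below, pmf_above; destruct (j <=? a)%nat; ring.
Qed.

Lemma sum_pmf_below_above :
  sum_f_R0 (fun j => pmf_below j + pmf_above j) (a + b) = 1 + pi a.
Proof.
  transitivity (sum_f_R0 (fun j => pmf_below j * 1 + pmf_above j * 1) (a + b));
    [apply sum_eq; intros; ring|].
  rewrite <- (sum_pmf_fold (fun _ => 1)), (sum_eq _ (pmf p q (a + b))) by (intros; ring).
  rewrite pmf_sum by lra; ring.
Qed.

Lemma sum_pmf_below_le1 : sum_f_R0 pmf_below (a + b) <= 1.
Proof.
  pose proof sum_pmf_below_above as H; rewrite sum_plus in H.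
  pose proof (sum_f_R0_le_mono pmf_above 0 (a + b) pmf_above_ge0 ltac:(lia)).
  unfold pmf_above at 1 in H0; simpl in H0; rewrite Nat.add_0_r in H0; lra.
Qed.

Lemma sum_pmf_above_le1 : sum_f_R0 pmf_above (a + b) <= 1.
Proof.
  pose proof sum_pmf_below_above as H; rewrite sum_plus in H.
  pose proof (sum_f_R0_le_mono pmf_below 0 (a + b) pmf_below_ge0 ltac:(lia)).
  unfold pmf_below at 1 in H0; simpl in H0; rewrite Nat.sub_0_r in H0; lra.
Qed.

Lemma pmf_up_step_lower n j : (2 * n <= b)%nat -> (j < n)%nat ->
  (1 - 2 * INR n / INR b) * pi (a + j) <= pi (a + S j).
Proof.
  intros Hnb Hjn; set (u := 2 * INR n / INR b).
  assert (HB : 0 < INR b) by (apply lt_0_INR; lia).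
  assert (Hua : u * INR a * q = 2 * INR n * p) by (unfold u; rewrite Rmult_assoc, hab; field; lra).
  assert (Hu : 0 <= u) by (unfold u; apply Rmult_le_pos;
    [pose proof (pos_INR n); lra | apply Rlt_le, Rinv_0_lt_compat; lra]).
  assert (HjnR : INR j + 1 <= INR n) by (rewrite <- S_INR; apply le_INR; lia).
  assert (Hkey : (1 - u) * (INR (S (a + j)) * q) <= (INR b - INR j) * p).
  { rewrite S_INR, plus_INR; pose proof (pos_INR j) as Hj0.
    assert (0 <= u * (INR j + 1) * q) by (apply Rmult_le_pos; [apply Rmult_le_pos|]; lra).
    assert (INR n <= 2 * INR n * p) by nra.
    assert (INR j * p + (INR j + 1) * q <= INR j + 1) by nra.
    nra. }
  assert (HSq : 0 < INR (S (a + j)) * q) by (apply Rmult_lt_0_compat; [apply lt_0_INR; lia | lra]).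
  replace (a + S j)%nat with (S (a + j)) by lia.
  apply Rmult_le_reg_r with (INR (S (a + j)) * q); [exact HSq|].
  replace (pi (S (a + j)) * (INR (S (a + j)) * q)) with (pi (a + j) * ((INR b - INR j) * p))
    by (rewrite <- (Rmult_assoc (pi (S (a + j)))), pmf_up_ratio; ring).
  pose proof (pmf_ge0 p q hq ltac:(lra) (a + b) (a + j)).
  replace ((1 - u) * pi (a + j) * (INR (S (a + j)) * q))
    with (pi (a + j) * ((1 - u) * (INR (S (a + j)) * q))) by ring.
  apply Rmult_le_compat_l; assumption.
Qed.

Lemma pmf_mode_small n : (8 * n * n <= b)%nat -> pi a * (3 / 4 * INR (S n)) <= 1.
Proof.
  intros Hnb; set (u := 2 * INR n / INR b).
  assert (HB : 0 < INR b) by (apply lt_0_INR; lia).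
  assert (Hnb' : 8 * INR n * INR n <= INR b)
    by (apply le_INR in Hnb; rewrite !mult_INR in Hnb; simpl in Hnb; lra).
  assert (Hnu : INR n * u <= 1 / 4)
    by (unfold u; apply Rmult_le_reg_r with (INR b); [lra|]; field_simplify; lra).
  assert (Hu : 0 <= u) by (unfold u; apply Rmult_le_pos;
    [pose proof (pos_INR n); lra | apply Rlt_le, Rinv_0_lt_compat; lra]).
  assert (Hu1 : u <= 1).
  { destruct (Nat.eq_dec n 0) as [->|Hn0]; [unfold u; simpl; lra|].
    assert (1 <= INR n) by (apply (le_INR 1); lia); nra. }
  assert (Hlow : forall j, (j <= n)%nat -> pi a * (1 - u) ^ j <= pi (a + j)).
  { induction j as [|j IH]; intros Hj; [rewrite Nat.add_0_r; simpl; lra|].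
    pose proof (pmf_up_step_lower n j ltac:(nia) ltac:(lia)) as Hstep; fold u in Hstep.
    apply Rle_trans with ((1 - u) * pi (a + j)); [|exact Hstep].
    change ((1 - u) ^ S j) with ((1 - u) * (1 - u) ^ j).
    pose proof (Rmult_le_compat_l (1 - u) _ _ ltac:(lra) (IH ltac:(lia))); lra. }
  assert (H34 : forall j, (j <= n)%nat -> 3 / 4 * pi a <= pmf_above j).
  { intros j Hj; unfold pmf_above; apply Rle_trans with (pi a * (1 - u) ^ j); [|now apply Hlow].
    assert (HjR : INR j <= INR n) by (apply le_INR; lia).
    assert (INR j * u <= INR n * u) by (apply Rmult_le_compat_r; lra).
    pose proof (bernoulli_ineq u j ltac:(lra)).
    pose proof (pmf_ge0 p q hq ltac:(lra) (a + b) a).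
    rewrite Rmult_comm; apply Rmult_le_compat_l; lra. }
  pose proof (sum_Rle _ _ n H34) as Hsum; rewrite sum_cte in Hsum.
  pose proof (sum_f_R0_le_mono pmf_above n (a + b) pmf_above_ge0 ltac:(nia)).
  pose proof sum_pmf_above_le1; lra.
Qed.

Lemma pmf_cross_identity j : (S j <= a)%nat ->
  pi (a + S j) * pi (a - j) * ((INR a + INR j + 1) * (INR a - INR j) * (INR b * INR b))
  = pi (a + j) * pi (a - S j) * ((INR b - INR j) * (INR b + INR j + 1) * (INR a * INR a)).
Proof.
  intros Hj.
  pose proof (pmf_up_ratio j) as Hup; pose proof (pmf_down_ratio j Hj) as Hdown.
  replace (a + S j)%nat with (S (a + j)) by lia.
  rewrite S_INR, plus_INR in Hup; rewrite minus_INR in Hdown by lia; rewrite S_INR in Hdown.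
  apply Rmult_eq_reg_r with (q * q); [|nra].
  transitivity ((pi (S (a + j)) * (INR a + INR j + 1) * q) * (pi (a - j) * (INR a - INR j) * q)
                * (INR b * INR b)); [ring|].
  rewrite Hup, Hdown.
  transitivity (pi (a + j) * pi (a - S j) * ((INR b - INR j) * (INR b + INR j + 1))
                * ((INR b * p) * (INR b * p))); [ring|].
  rewrite <- hab; ring.
Qed.

Lemma sum_pmf_fold_sq :
  sum_f_R0 (fun j => (pmf_below j + pmf_above j) * INR j ^ 2) (a + b) = INR a * q.
Proof.
  rewrite <- (pmf_variance_at_mean p q hq hpq a b hab).
  pose proof (sum_pmf_fold (fun x => (INR x - INR a) ^ 2)) as H.
  cbv beta in H; rewrite Rminus_diag, pow_i, Rmult_0_r, Rplus_0_r in H by lia; rewrite H.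
  apply sum_eq; intros j _; unfold pmf_below, pmf_above.
  rewrite plus_INR; destruct (Nat.leb_spec j a); [rewrite minus_INR by lia|]; ring.
Qed.

Lemma damped_mass_fold :
  damped_mass p q a b + pi a
  = sum_f_R0 (fun j => pmf_below j + pmf_above j * ((q / p) ^ 2) ^ j) (a + b).
Proof.
  transitivity (sum_f_R0 (fun x => pi x * damping p q a x) (a + b) + pi a * damping p q a a).
  { unfold damped_mass; f_equal; unfold damping; rewrite Nat.leb_refl; ring. }
  rewrite sum_pmf_fold; apply sum_eq; intros j _; unfold damping.
  replace (a - j <=? a)%nat with true by (symmetry; apply Nat.leb_le; lia).
  destruct (Nat.leb_spec (a + j) a).
  - replace j with 0%nat by lia; simpl; ring.
  - replace (a + j - a)%nat with j by lia; rewrite pow_mult; ring.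
Qed.

Lemma sum_above_damped_le (rho : R) : 0 <= rho < 1 ->
  sum_f_R0 (fun j => pmf_above j * rho ^ j) (a + b) <= pi a / (1 - rho).
Proof.
  intros Hrho; apply Rle_trans with (sum_f_R0 (fun j => rho ^ j * pi a) (a + b)).
  - apply sum_Rle; intros j _; rewrite Rmult_comm.
    apply Rmult_le_compat_l; [apply pow_le; lra | apply pmf_le_mode].
  - rewrite <- scal_sum; apply Rmult_le_compat_l; [apply pmf_ge0; lra|].
    now apply sum_f_R0_geom_le.
Qed.

Section SymmetricWindow.

Variable J : nat.
Hypotheses (hJ1 : (1 <= J)%nat) (hJb : (J <= b)%nat)
  (hJa : 2 * (INR J * INR J) <= INR a * INR a).

Local Notation delta := (2 / INR b + 2 * (INR J * INR J) / (INR b * INR b)).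

Hypothesis hJd : INR J * delta <= 1 / 2.

Lemma delta_bounds : 0 <= delta <= 1 / 2.
Proof.
  assert (0 < INR b) by (apply lt_0_INR; lia).
  assert (1 <= INR J) by (apply (le_INR 1); lia).
  assert (0 <= delta).
  { apply Rplus_le_le_0_compat; apply Rmult_le_pos; try nra;
      apply Rlt_le, Rinv_0_lt_compat; nra. }
  split; nra.
Qed.

Lemma pmf_symmetric_compare j : (j <= J)%nat ->
  (1 - delta) ^ j * pi (a - j) <= pi (a + j) <= (1 + delta) ^ j * pi (a - j).
Proof.
  pose proof delta_bounds as Hd; pose proof b_lt_a as Hba.
  induction j as [|j IH]; intros Hj.
  { rewrite Nat.add_0_r, Nat.sub_0_r; simpl; lra. }
  assert (HB : 0 < INR b) by (apply lt_0_INR; lia).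
  assert (HjJ : INR j + 1 <= INR J) by (rewrite <- S_INR; apply le_INR; lia).
  assert (HJB : INR J <= INR b) by (apply le_INR; lia).
  assert (HBA : INR b < INR a) by (apply lt_INR; lia).
  destruct (mode_ratio_bounds (INR a) (INR b) (INR j) (INR J) HB HBA (pos_INR j) HjJ HJB hJa)
    as [Hlo Hhi].
  assert (HK : 0 < (INR a + INR j + 1) * (INR a - INR j) * (INR b * INR b)).
  { pose proof (pos_INR j); repeat apply Rmult_lt_0_compat; nra. }
  assert (HR : 0 <= (INR b - INR j) * (INR b + INR j + 1) * (INR a * INR a)).
  { pose proof (pos_INR j); repeat apply Rmult_le_pos; nra. }
  pose proof (pmf_pos (a - j) ltac:(lia)); pose proof (pmf_ge0 p q hq ltac:(lra) (a + b) (a - S j)).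
  pose proof (pmf_cross_identity j ltac:(lia)) as Hid.
  destruct (IH ltac:(lia)) as [IHlo IHhi].
  replace ((1 - delta) ^ S j) with ((1 - delta) ^ j * (1 - delta)) by (simpl; ring).
  replace ((1 + delta) ^ S j) with ((1 + delta) ^ j * (1 + delta)) by (simpl; ring).
  split.
  - apply (ratio_step_lower (pi (a + j)) (pi (a - j)) _ _ _ _ _ _ H HK H0 HR);
      [apply pow_le; lra | exact Hid | exact IHlo | exact Hlo].
  - apply (ratio_step_upper (pi (a + j)) (pi (a - j)) _ _ _ _ _ _ H HK H0 HR);
      [apply pow_le; lra | exact Hid | exact IHhi | exact Hhi].
Qed.

Lemma pmf_symmetric_diff j : (j <= J)%nat ->
  Rabs (pi (a + j) - pi (a - j)) <= 2 * INR J * delta * pi (a - j).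
Proof.
  intros Hj; destruct (pmf_symmetric_compare j Hj) as [Hlo Hhi]; pose proof delta_bounds.
  assert (HjJ : INR j <= INR J) by (apply le_INR; lia).
  set (y := INR j * delta).
  assert (Hy : 0 <= y <= INR J * delta) by (unfold y; pose proof (pos_INR j); split; nra).
  pose proof (bernoulli_ineq delta j ltac:(lra)) as Hbern; fold y in Hbern.
  assert (Hprod : (1 + delta) ^ j * (1 - delta) ^ j <= 1).
  { rewrite <- Rpow_mult_distr; apply Rle_trans with (1 ^ j); [apply pow_incr; split; nra | rewrite pow1; lra]. }
  assert (Hup : (1 + delta) ^ j <= 1 + 2 * y).
  { pose proof (pow_le (1 + delta) j ltac:(lra)); nra. }
  pose proof (pmf_ge0 p q hq ltac:(lra) (a + b) (a - j)).
  apply Rabs_le; split; nra.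
Qed.

Lemma pmf_fold_term_bound j :
  Rabs (pmf_below j - pmf_above j)
  <= 2 * INR J * delta * pmf_below j + (pmf_below j + pmf_above j) * INR j ^ 2 / (INR J * INR J).
Proof.
  pose proof (pmf_below_ge0 j); pose proof (pmf_above_ge0 j); pose proof delta_bounds.
  assert (HJ : 1 <= INR J) by (apply (le_INR 1); lia).
  assert (Hsq : 0 <= (pmf_below j + pmf_above j) * INR j ^ 2 / (INR J * INR J)).
  { apply Rmult_le_pos; [apply Rmult_le_pos; [lra | apply pow_le, pos_INR]|].
    apply Rlt_le, Rinv_0_lt_compat; nra. }
  destruct (Nat.le_gt_cases j J) as [HjJ|HjJ].
  - pose proof b_lt_a.
    unfold pmf_below, pmf_above in *.
    replace (j <=? a)%nat with true in * by (symmetry; apply Nat.leb_le; lia).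
    rewrite Rabs_minus_sym; pose proof (pmf_symmetric_diff j HjJ); lra.
  - assert (HJj : INR J * INR J <= INR j ^ 2).
    { assert (INR J <= INR j) by (apply le_INR; lia); simpl; nra. }
    assert (pmf_below j + pmf_above j
            <= (pmf_below j + pmf_above j) * INR j ^ 2 / (INR J * INR J)).
    { apply Rmult_le_reg_r with (INR J * INR J); [nra|]; unfold Rdiv.
      rewrite Rmult_assoc, Rinv_l, Rmult_1_r by nra; nra. }
    assert (0 <= 2 * INR J * delta * pmf_below j) by (apply Rmult_le_pos; [|lra]; nra).
    apply Rabs_le; split; lra.
Qed.

Lemma pmf_fold_defect :
  Rabs (sum_f_R0 (fun j => pmf_below j - pmf_above j) (a + b))
  <= 2 * INR J * delta + INR a * q / (INR J * INR J).
Proof.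
  eapply Rle_trans; [apply Rsum_abs|].
  eapply Rle_trans; [apply sum_Rle; intros j _; apply pmf_fold_term_bound|].
  rewrite sum_plus.
  replace (sum_f_R0 (fun j => 2 * INR J * delta * pmf_below j) (a + b))
    with (2 * INR J * delta * sum_f_R0 pmf_below (a + b))
    by (rewrite scal_sum; apply sum_eq; intros; ring).
  replace (sum_f_R0 (fun j => (pmf_below j + pmf_above j) * INR j ^ 2 / (INR J * INR J)) (a + b))
    with (/ (INR J * INR J) * sum_f_R0 (fun j => (pmf_below j + pmf_above j) * INR j ^ 2) (a + b))
    by (rewrite scal_sum; apply sum_eq; intros; unfold Rdiv; ring).
  rewrite sum_pmf_fold_sq.
  pose proof sum_pmf_below_le1; pose proof delta_bounds.
  assert (0 <= 2 * INR J * delta) by (pose proof (pos_INR J); nra).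
  unfold Rdiv; rewrite (Rmult_comm (/ _)); nra.
Qed.

End SymmetricWindow.

Lemma damped_mass_error :
  Rabs (2 * damped_mass p q a b - 1)
  <= pi a * (1 + 2 / (1 - (q / p) ^ 2))
     + Rabs (sum_f_R0 (fun j => pmf_below j - pmf_above j) (a + b)).
Proof.
  pose proof (damping_ratio_bounds p q hq hqp) as Hrho.
  set (rho := (q / p) ^ 2) in *; set (D := sum_f_R0 (fun j => pmf_below j - pmf_above j) (a + b)).
  pose proof damped_mass_fold as Hfold; fold rho in Hfold.
  pose proof sum_pmf_below_above as Htot.
  rewrite sum_plus in Hfold, Htot.
  assert (HE : 2 * damped_mass p q a b - 1
               = D + 2 * sum_f_R0 (fun j => pmf_above j * rho ^ j) (a + b) - pi a)
    by (unfold D; rewrite minus_sum; lra).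
  rewrite HE.
  pose proof (sum_above_damped_le rho Hrho).
  assert (0 <= sum_f_R0 (fun j => pmf_above j * rho ^ j) (a + b))
    by (apply cond_pos_sum; intros; apply Rmult_le_pos; [apply pmf_above_ge0 | apply pow_le; lra]).
  pose proof (pmf_ge0 p q hq ltac:(lra) (a + b) a).
  assert (pi a * (1 + 2 / (1 - rho)) = pi a + 2 * (pi a / (1 - rho))) by (field; lra).
  pose proof (Rle_abs D); pose proof (Rle_abs (- D)); rewrite Rabs_Ropp in *.
  apply Rabs_le; split; lra.
Qed.

Lemma pmf_mode_rate m : (1 <= m)%nat -> (8 * m * m <= b)%nat -> pi a <= 2 / INR m.
Proof.
  intros Hm Hmb; pose proof (pmf_mode_small m Hmb) as Hmode; rewrite S_INR in Hmode.
  assert (1 <= INR m) by (apply (le_INR 1); lia).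
  pose proof (pmf_ge0 p q hq ltac:(lra) (a + b) a).
  apply Rmult_le_reg_r with (INR m); [lra|]; unfold Rdiv.
  rewrite Rmult_assoc, Rinv_l, Rmult_1_r by lra; nra.
Qed.

Lemma pmf_fold_defect_rate m : (8 <= m)%nat -> (m ^ 8 <= b)%nat ->
  Rabs (sum_f_R0 (fun j => pmf_below j - pmf_above j) (a + b)) <= 9 / INR m.
Proof.
  intros Hm8 Hmb; pose proof b_lt_a as Hba.
  set (s := Nat.sqrt b); set (J := (m * s)%nat).
  destruct (Nat.sqrt_spec b ltac:(lia)) as [Hsb Hbs]; fold s in Hsb, Hbs.
  assert (Hm4 : (m ^ 4 <= s)%nat)
    by (apply Nat.sqrt_le_square; rewrite <- Nat.pow_add_r; exact Hmb).
  assert (Hm1 : (m <= m ^ 4)%nat) by (rewrite <- (Nat.pow_1_r m) at 1; apply Nat.pow_le_mono_r; lia).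
  assert (Hm2 : (m * m <= m ^ 4)%nat) by (rewrite <- Nat.pow_2_r; apply Nat.pow_le_mono_r; lia).
  assert (HJa : (2 * (J * J) <= a * a)%nat).
  { unfold J; replace (2 * (m * s * (m * s)))%nat with (2 * (m * m) * (s * s))%nat by ring.
    apply Nat.le_trans with (2 * s * (s * s))%nat; [apply Nat.mul_le_mono_r; lia|].
    apply Nat.le_trans with (s * s * (s * s))%nat; [apply Nat.mul_le_mono_r; nia|].
    apply Nat.mul_le_mono; lia. }
  assert (HM : 8 <= INR m) by (replace 8 with (INR 8) by (simpl; lra); apply le_INR; lia).
  assert (HMS : INR m ^ 4 <= INR s) by (rewrite <- pow_INR; apply le_INR; lia).
  assert (HSB : INR s * INR s <= INR b) by (rewrite <- mult_INR; apply le_INR; lia).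
  assert (HBS : INR b < (INR s + 1) * (INR s + 1))
    by (rewrite <- S_INR, <- mult_INR; apply lt_INR; lia).
  destruct (window_rates (INR m) (INR s) (INR b) HM HMS HSB HBS) as [HJd HBJ].
  rewrite <- mult_INR in HJd, HBJ; fold J in HJd, HBJ.
  assert (HJa' : 2 * (INR J * INR J) <= INR a * INR a)
    by (replace 2 with (INR 2) by reflexivity; rewrite <- !mult_INR; apply le_INR; lia).
  assert (H4m : 4 / INR m <= 1 / 2)
    by (apply Rmult_le_reg_r with (INR m); [lra|]; field_simplify; lra).
  pose proof (pmf_fold_defect J ltac:(unfold J; nia) ltac:(unfold J; nia) HJa' ltac:(lra)) as Hdef.
  assert (Haq : INR a * q / (INR J * INR J) <= 1 / INR m).
  { rewrite hab; eapply Rle_trans; [|exact HBJ].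
    assert (HJ : 0 < INR J) by (apply lt_0_INR; unfold J; nia).
    unfold Rdiv; apply Rmult_le_compat_r; [apply Rlt_le, Rinv_0_lt_compat; nra|].
    assert (INR b * p <= INR b * 1) by (apply Rmult_le_compat_l; [apply pos_INR | lra]); lra. }
  assert (E : 9 / INR m = 2 * (4 / INR m) + 1 / INR m) by (unfold Rdiv; ring).
  lra.
Qed.

Lemma damped_mass_rate m : (8 <= m)%nat -> (m ^ 8 <= b)%nat ->
  Rabs (2 * damped_mass p q a b - 1) <= (11 + 4 / (1 - (q / p) ^ 2)) / INR m.
Proof.
  intros Hm8 Hmb.
  pose proof (pmf_mode_rate m ltac:(lia) ltac:(pose proof (pow8_ge m Hm8); lia)) as Hmode.
  pose proof (pmf_fold_defect_rate m Hm8 Hmb) as Hdef.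
  pose proof damped_mass_error as Herr.
  set (K := 1 + 2 / (1 - (q / p) ^ 2)) in Herr.
  assert (HK : 0 <= K).
  { pose proof (damping_ratio_bounds p q hq hqp).
    assert (0 < 2 / (1 - (q / p) ^ 2)) by (apply Rdiv_lt_0_compat; lra); unfold K; lra. }
  pose proof (Rmult_le_compat_r K _ _ HK Hmode).
  assert (E : 2 / INR m * K + 9 / INR m = (11 + 4 / (1 - (q / p) ^ 2)) / INR m)
    by (unfold K, Rdiv; ring).
  lra.
Qed.

End NearMode.

Lemma is_lim_seq_damped_mass_error p q k1 k2 :
  0 < q -> q < p -> p + q = 1 -> INR k1 * q = INR k2 * p -> (0 < k2)%nat ->
  is_lim_seq (fun t => 2 * damped_mass p q (t * k1) (t * k2) - 1) 0.
Proof.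
  intros hq hqp hpq hk hk2; apply is_lim_seq_spec; intros eps.
  set (C := 11 + 4 / (1 - (q / p) ^ 2)).
  destruct (INR_archimed eps C (cond_pos eps)) as [m0 Hm0].
  set (m := (m0 + 8)%nat).
  assert (Hm : INR m0 <= INR m) by (apply le_INR; lia).
  assert (HmR : 0 < INR m) by (apply lt_0_INR; lia).
  exists (m ^ 8)%nat; intros t Ht.
  assert (Hm8 : (1 <= m ^ 8)%nat) by (rewrite <- (Nat.pow_1_l 8); apply Nat.pow_le_mono_l; lia).
  rewrite Rminus_0_r; apply Rle_lt_trans with (C / INR m).
  - apply damped_mass_rate; [lra | lra | lra | | nia | lia | apply Nat.le_trans with t; nia].
    rewrite !mult_INR, !Rmult_assoc, hk; reflexivity.
  - apply Rmult_lt_reg_r with (INR m); [exact HmR|]; unfold Rdiv.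
    rewrite Rmult_assoc, Rinv_l, Rmult_1_r by lra.
    pose proof (cond_pos eps); nra.
Qed.

Lemma pk_facts k1 k2 : (0 < k2)%nat -> (k2 < k1)%nat ->
  0 < 1 - pk k1 k2 /\ 1 - pk k1 k2 < pk k1 k2 /\ INR k1 * (1 - pk k1 k2) = INR k2 * pk k1 k2.
Proof.
  intros hk2 hk; apply lt_INR in hk; apply lt_0_INR in hk2; unfold pk.
  replace (1 - INR k1 / (INR k1 + INR k2)) with (INR k2 / (INR k1 + INR k2)) by (field; lra).
  repeat split.
  - apply Rdiv_lt_0_compat; lra.
  - apply Rmult_lt_compat_r; [apply Rinv_0_lt_compat|]; lra.
  - field; lra.
Qed.

Theorem corollary3 (k1 k2 : nat) (hk2 : (0 < k2)%nat) (hk : (k2 < k1)%nat) :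
  exists S : nat -> R,
    (forall t : nat, (0 < t)%nat -> is_series (term k1 k2 t) (S t)) /\
    is_lim_seq S ((1 / 4) / (pk k1 k2 - 1 / 2)).
Proof.
  destruct (pk_facts k1 k2 hk2 hk) as (hq & hqp & hkpq).
  set (p := pk k1 k2) in *; set (q := 1 - p) in *.
  assert (hpq : p + q = 1) by (unfold q; ring).
  exists (fun t => damped_mass p q (t * k1) (t * k2) / (p - q)); split.
  - intros t _; eapply is_series_ext; [|apply (is_series_damped_mass p q hq hqp hpq)].
    intros i; unfold term; rewrite binom_C by lia; reflexivity.
  - set (c := / (2 * (p - q))).
    pose proof (is_lim_seq_damped_mass_error p q k1 k2 hq hqp hpq hkpq hk2) as Herr.
    pose proof (is_lim_seq_plus' _ _ _ _ (is_lim_seq_scal_r _ c _ Herr) (is_lim_seq_const c)) as Hlim.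
    replace ((1 / 4) / (p - 1 / 2)) with (0 * c + c) by (unfold c, q; field; lra).
    eapply is_lim_seq_ext; [|exact Hlim].
    intros t; unfold c; field; lra.
Qed.
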